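(* Let $K\subseteq L$ be real closed fields, and $C$ an additive cut in $L$. Let $C'$ and $C'_{\mathrm{mlt}}$ be the cuts induced on $K$ by $C$ and $C_{\mathrm{mlt}}$ respectively, i.e. $C'=(C^-\cap K,C^+\cap K)$ and $C'_{\mathrm{mlt}}=((C_{\mathrm{mlt}})^-\cap K,(C_{\mathrm{mlt}})^+\cap K)$. Suppose that $C'_{\mathrm{mlt}}=(C')_{\mathrm{mlt}}$, and that $x,y\in L$ are two realizations of the cut $C'$ of $K$, with $x\in C^-$ and $y\in C^+$. Then $y/x$ induces the cut $C'_{\mathrm{mlt}}$ on $K$; that is, $(C'_{\mathrm{mlt}})^-=\{a\in K: a<y/x\}$ and $(C'_{\mathrm{mlt}})^+=\{a\in K: a\ge y/x\}$.
   Context: A cut of an ordered field $F$ is a pair $C=(C^-,C^+)$ with $F=C^-\cup C^+$ disjoint and $C^-<C^+$. $F_+=\{c\in F: c>0\}$. A cut $C$ of $F$ is additive if $C^-$ is closed under addition and contains some positive element. For a cut $C$ of $F$, $C_{\mathrm{mlt}}$ is the cut of $F$ whose left side is $\{r\in F: r\cdot(C^-\cap F_+)\subseteq C^-\}$ (and whose right side is the complement). An element $a$ of an extension field realizes a cut $D$ of $K$ if $D^-=\{c\in K:c<a\}$ and $D^+=\{c\in K:c>a\}$. *)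

From HB Require Import structures.
From mathcomp Require Import all_boot all_order all_algebra.
From mathcomp Require Import polyrcf.
Set Implicit Arguments. Unset Strict Implicit. Unset Printing Implicit Defensive.
Import Order.TTheory GRing.Theory Num.Theory.
Local Open Scope ring_scope.

(* A cut C = (C^-, C^+) of an ordered field F is represented by its left side
   C^- : F -> Prop; the right side C^+ is the complement.  The condition
   C^- < C^+ is equivalent to C^- being downward closed. *)
Definition is_cut (F : realFieldType) (Cm : F -> Prop) : Prop :=
  forall a b : F, Cm b -> a <= b -> Cm a.

Definition cut_right (F : realFieldType) (Cm : F -> Prop) : F -> Prop :=
  fun a => ~ Cm a.

Definition additive_cut (F : realFieldType) (Cm : F -> Prop) : Prop :=
  is_cut Cm /\ (forall a b, Cm a -> Cm b -> Cm (a + b)) /\ (exists c, 0 < c /\ Cm c).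

Definition cut_mlt (F : realFieldType) (Cm : F -> Prop) : F -> Prop :=
  fun r => forall c, Cm c -> 0 < c -> Cm (r * c).

Definition induced_cut (K L : realFieldType) (f : K -> L) (Cm : L -> Prop) : K -> Prop :=
  fun a => Cm (f a).

Definition realizes (K L : realFieldType) (f : K -> L) (Dm : K -> Prop) (x : L) : Prop :=
  (forall c, Dm c <-> f c < x) /\ (forall c, cut_right Dm c <-> x < f c).

From HB Require Import structures.
From mathcomp Require Import all_boot all_order all_algebra.
From mathcomp Require Import polyrcf.
Import Order.TTheory GRing.Theory Num.Theory.
Local Open Scope ring_scope.

(* A multiplier [r ∈ C_mlt], tested on [x ∈ C^-], gives [r x ∈ C^-], which
   lies below [y ∈ C^+]; hence [r < y/x].  Conversely, let [a < y/x] and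
   [0 < c ∈ C'].  As [x] realizes [C'], [c < x], so [a c < y]; as [y] realizes
   [C'] as well, [a c ∈ C'].  Thus [a ∈ (C')_mlt = C'_mlt].  The embedding
   keeps [c] positive because [K] is real closed: [c] is a square. *)

Lemma cut_lt {F : realFieldType} {C : F -> Prop} {a b : F} :
  is_cut C -> C a -> cut_right C b -> a < b.
Proof. by move=> cutC Ca Nb; rewrite ltNge; apply/negP => /(cutC _ _ Ca). Qed.

Lemma cut_mlt_lt_div {F : realFieldType} {C : F -> Prop} {r x y : F} :
  is_cut C -> C x -> cut_right C y -> 0 < x -> cut_mlt C r -> r < y / x.
Proof.
move=> cutC Cx Ny x0 Cr; rewrite ltr_pdivlMr //.
exact: cut_lt cutC (Cr x Cx x0) Ny.
Qed.

Lemma mulr_lt_of_lt_div {F : realFieldType} {r c x y : F} :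
  0 < x -> 0 < y -> 0 <= c -> c < x -> r < y / x -> r * c < y.
Proof.
move=> x0 y0 c0 cx; rewrite ltr_pdivlMr //; have [r0|r0] := leP 0 r => rxy.
  exact: le_lt_trans (ler_wpM2l r0 (ltW cx)) rxy.
by rewrite (le_lt_trans _ y0) // mulr_le0_ge0 // ltW.
Qed.

Lemma rmorph_rcf_ge0 {K : rcfType} {L : realDomainType}
    (f : {rmorphism K -> L}) {c : K} :
  0 <= c -> 0 <= f c.
Proof. by move=> c0; rewrite -(sqr_sqrtr c0) rmorphXn sqr_ge0. Qed.

Lemma lt_div_cut_mlt_induced {K : rcfType} {L : realFieldType}
    {f : {rmorphism K -> L}} {C : L -> Prop} {x y : L} {a : K} :
  realizes f (induced_cut f C) x -> realizes f (induced_cut f C) y ->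
  0 < x -> 0 < y -> f a < y / x -> cut_mlt (induced_cut f C) a.
Proof.
move=> [rx _] [ry _] x0 y0 ayx c Cc c0; apply/ry; rewrite rmorphM.
apply: mulr_lt_of_lt_div ayx => //; last exact/rx.
exact/rmorph_rcf_ge0/ltW.
Qed.

Theorem lemma2p10 (K L : rcfType) (f : {rmorphism K -> L})
  (C : L -> Prop) (x y : L) :
  additive_cut C ->
  (forall a : K, induced_cut f (cut_mlt C) a <-> cut_mlt (induced_cut f C) a) ->
  realizes f (induced_cut f C) x -> realizes f (induced_cut f C) y ->
  C x -> cut_right C y ->
  (forall a : K, induced_cut f (cut_mlt C) a <-> f a < y / x) /\
  (forall a : K, cut_right (induced_cut f (cut_mlt C)) a <-> y / x <= f a).
Proof.
move=> [cutC [_ [c [c0 Cc]]]] mltE rx ry Cx Ny.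
have C0 : induced_cut f C 0.
  by rewrite /induced_cut rmorph0; exact: cutC Cc (ltW c0).
have x0 : 0 < x by rewrite -(rmorph0 f); apply/rx.1.
have y0 : 0 < y := lt_trans x0 (cut_lt cutC Cx Ny).
have mltP (a : K) : induced_cut f (cut_mlt C) a <-> f a < y / x.
  split=> [|ayx]; first exact: cut_mlt_lt_div.
  exact/mltE/(lt_div_cut_mlt_induced rx ry x0 y0 ayx).
split=> // a; rewrite /cut_right leNgt.
by split=> [Na | /negP ayx /mltP //]; apply/negP => /mltP.
Qed.
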